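(* Let $(X,d)$ be a complete metric space and $T\colon X\to X$ a mapping for which there exists $k<\kappa(X)$ such that for all $(x,y)\in X\times X$ with $D(x,o(y))\le D(x,o(x))$ and all $n\in\mathbb N$, $$\lim_{m\to\infty} D(T^nx,o(T^my))\le k\,D(x,o(y)).$$ Then either all the orbits are unbounded or there exists $x\in X$ with $Tx=x$.
   Context: The orbit of $x$ under $T$ is $o(x)=\{x\}\cup\{T^nx:n\in\mathbb N\}$; for nonempty $C\subseteq X$, $D(x,C)=\sup\{d(x,y):y\in C\}$. $B(x,r)$ denotes the closed ball. For $c\ge1$, balls in $X$ are $c$-regular if for every $k'<c$ there are $\mu,\alpha\in(0,1)$ such that for all $x,y\in X$ and $r>0$ with $d(x,y)\ge(1-\mu)r$ there exists $z\in X$ with $B(x,(1+\mu)r)\cap B(y,k'(1+\mu)r)\subseteq B(z,\alpha r)$. The Lifschitz characteristic is $\kappa(X)=\sup\{c\ge1:\text{balls in }X\text{ are }c\text{-regular}\}$. *)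

From mathcomp Require Import all_boot all_order all_algebra.
From mathcomp Require Import all_classical all_reals all_analysis.
Set Implicit Arguments. Unset Strict Implicit. Unset Printing Implicit Defensive.
Import Order.TTheory GRing.Theory Num.Theory.
Local Open Scope classical_set_scope.
Local Open Scope ring_scope.

Definition is_metric (R : realType) (X : Type) (d : X -> X -> R) : Prop :=
  (forall x y, 0 <= d x y) /\ (forall x y, d x y = 0 <-> x = y) /\
  (forall x y, d x y = d y x) /\ (forall x y z, d x z <= d x y + d y z).

Definition is_complete (R : realType) (X : Type) (d : X -> X -> R) : Prop :=
  forall u : nat -> X,
    (forall e : R, 0 < e -> exists N, forall m n, (N <= m)%N -> (N <= n)%N ->
        d (u m) (u n) < e) ->
    exists l : X, forall e : R, 0 < e -> exists N, forall n, (N <= n)%N ->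
        d (u n) l < e.

Definition mcball (R : realType) (X : Type) (d : X -> X -> R) (x : X) (r : R)
  : set X := [set y | d x y <= r].

Definition torbit (X : Type) (T : X -> X) (x : X) : set X :=
  [set x] `|` [set iter n T x | n in [set n : nat | (0 < n)%N]].

Definition Dsup (R : realType) (X : Type) (d : X -> X -> R) (x : X) (C : set X)
  : \bar R := ereal_sup [set (d x y)%:E | y in C].

Definition mbounded (R : realType) (X : Type) (d : X -> X -> R) (A : set X)
  : Prop := exists x0 : X, exists r : R, forall y, A y -> d x0 y <= r.

Definition c_regular (R : realType) (X : Type) (d : X -> X -> R) (c : R) : Prop :=
  forall k' : R, k' < c ->
    exists mu alpha : R, 0 < mu < 1 /\ 0 < alpha < 1 /\
      forall (x y : X) (r : R), 0 < r -> (1 - mu) * r <= d x y ->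
        exists z : X,
          mcball d x ((1 + mu) * r) `&` mcball d y (k' * ((1 + mu) * r))
            `<=` mcball d z (alpha * r).

Definition lifschitz_char (R : realType) (X : Type) (d : X -> X -> R) : \bar R :=
  ereal_sup [set c%:E | c in [set c : R | 1 <= c /\ c_regular d c]].

From mathcomp Require Import all_boot all_order all_algebra.
From mathcomp Require Import all_classical all_reals all_analysis.
From mathcomp Require Import ring lra.
Import Order.TTheory GRing.Theory Num.Theory.
Local Open Scope classical_set_scope.
Local Open Scope ring_scope.

(* Regular balls make orbits shrink: if o(w) lies in B(z,r), either o(z) itself
   stays in B(z,(1-mu)r), or some T^n z is far from z and the contraction
   hypothesis traps a tail o(T^m w') of an orbit in B(z,(1+mu)r) and in
   B(T^n z, k(1+mu)r), hence in a ball B(z',alpha r) with d(z,z') <= 2r.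
   Iterating from a bounded orbit, the centres form a Cauchy sequence; around
   its limit l there are orbits in arbitrarily small balls B(l,e), and the
   hypothesis with n = 1 then gives d(l,Tl) <= (1+2k)e, so Tl = l. *)

Set Implicit Arguments.
Unset Strict Implicit.
Unset Printing Implicit Defensive.

Lemma dependent_choice_nat (A : Type) (P : nat -> A -> Prop)
    (Q : nat -> A -> A -> Prop) (a0 : A) :
  P 0%N a0 -> (forall j a, P j a -> exists a', P j.+1 a' /\ Q j a a') ->
  exists s : nat -> A, forall j, P j (s j) /\ Q j (s j) (s j.+1).
Proof.
move=> P0 step.
have /choice[g gP] : forall ja : nat * A,
    exists a', P ja.1 ja.2 -> P ja.1.+1 a' /\ Q ja.1 ja.2 a'.
  move=> [j a] /=; have [/step[a' ?]|NP] := pselect (P j a); last by exists a => /NP.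
  by exists a'.
pose s j := iteri j (fun i a => g (i, a)) a0.
have Ps j : P j (s j) by elim: j => [|j IH] //; exact: (gP (j, s j) IH).1.
by exists s => j; split; [|exact: (gP (j, s j) (Ps j)).2].
Qed.

Lemma expr_lt_eventually (R : realType) (b eta : R) : 0 <= b < 1 -> 0 < eta ->
  exists N, forall n, (N <= n)%N -> b ^+ n < eta.
Proof.
move=> /andP[b_ge0 b_lt1] eta_gt0.
have : `|b| < 1 by rewrite ger0_norm.
move=> /cvg_expr/cvgrPdist_lt/(_ eta eta_gt0)[N _ bN].
by exists N => n /bN; rewrite /= sub0r normrN ger0_norm ?exprn_ge0.
Qed.

Lemma limn_lt_nonincreasing (R : realType) (u : (\bar R)^nat) (a : \bar R) :
  nonincreasing_seq u -> (limn u < a)%E -> exists n, (u n < a)%E.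
Proof.
move=> u_ni; rewrite (cvg_lim _ (ereal_nonincreasing_cvgn u_ni)) //.
by case/ereal_inf_lt => _ [n _ <-]; exists n.
Qed.

Section Orbit.
Variables (X : Type) (T : X -> X).

Lemma torbitP x y : torbit T x y <-> exists n, iter n T x = y.
Proof.
split => [[->|[n _ <-]]|[[|n] <-]]; [by exists 0%N|by exists n|by left|].
by right; exists n.+1.
Qed.

Lemma torbit_iter x n : torbit T x (iter n T x).
Proof. by apply/torbitP; exists n. Qed.

Lemma sub_torbit_iter x n : torbit T (iter n T x) `<=` torbit T x.
Proof. by move=> _ /torbitP[m <-]; rewrite -iterD; exact: torbit_iter. Qed.

End Orbit.

Arguments sub_torbit_iter {X} T x n [t].

Section Dsup.
Variables (R : realType) (X : Type) (d : X -> X -> R).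

Lemma Dsup_le z (A : set X) r : (Dsup d z A <= r%:E)%E <-> A `<=` mcball d z r.
Proof.
split => [Dr y Ay|Ar]; last by apply: ge_ereal_sup => _ [y /Ar ? <-].
by rewrite /mcball /= -lee_fin; apply: le_trans Dr; apply: ereal_sup_ubound; exists y.
Qed.

Lemma Dsup_ge z (A : set X) y : A y -> ((d z y)%:E <= Dsup d z A)%E.
Proof. by move=> Ay; apply: ereal_sup_ubound; exists y. Qed.

Lemma le_Dsup z (A B : set X) : A `<=` B -> (Dsup d z A <= Dsup d z B)%E.
Proof. by move=> AB; apply/ereal_sup_le/image_subset. Qed.

Lemma le_mcball z r s : r <= s -> mcball d z r `<=` mcball d z s.
Proof. by move=> rs y /le_trans; apply. Qed.

Lemma Dsup_torbit_nonincreasing (T : X -> X) x y :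
  nonincreasing_seq (fun m => Dsup d x (torbit T (iter m T y))).
Proof.
by apply/nonincreasing_seqP => m; apply/le_Dsup/(sub_torbit_iter T (iter m T y) 1).
Qed.

Lemma limn_Dsup_lt (T : X -> X) x y a :
  (limn (fun m => Dsup d x (torbit T (iter m T y))) < a%:E)%E ->
  exists m, torbit T (iter m T y) `<=` mcball d x a.
Proof.
move=> /(limn_lt_nonincreasing (Dsup_torbit_nonincreasing T x y))[m lt_a].
by exists m; apply/Dsup_le/ltW.
Qed.

End Dsup.

Definition orbit_contraction (R : realType) (X : Type) (d : X -> X -> R)
    (T : X -> X) (k : R) : Prop :=
  forall x y : X, (Dsup d x (torbit T y) <= Dsup d x (torbit T x))%E ->
    forall n : nat, (0 < n)%N ->
      (limn (fun m : nat => Dsup d (iter n T x) (torbit T (iter m T y)))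
         <= k%:E * Dsup d x (torbit T y))%E.

Definition ball_regular (R : realType) (X : Type) (d : X -> X -> R)
    (k mu alpha : R) : Prop :=
  forall (x y : X) (r : R), 0 < r -> (1 - mu) * r <= d x y ->
    exists z : X,
      mcball d x ((1 + mu) * r) `&` mcball d y (k * ((1 + mu) * r))
        `<=` mcball d z (alpha * r).

Section Metric.
Variables (R : realType) (X : Type) (d : X -> X -> R).
Hypothesis hmet : is_metric d.

Let d_ge0 x y : 0 <= d x y := hmet.1 x y.
Let d_eq0 x y : d x y = 0 <-> x = y := hmet.2.1 x y.
Let distC x y : d x y = d y x := hmet.2.2.1 x y.
Let d_triangle x y z : d x z <= d x y + d y z := hmet.2.2.2 x y z.

Lemma geometric_chain_dist (u : nat -> X) (c b : R) : 0 <= b < 1 ->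
    (forall j, d (u j) (u j.+1) <= c * b ^+ j) ->
  forall i j, d (u i) (u (i + j)%N) <= c * b ^+ i / (1 - b).
Proof.
move=> /andP[b_ge0 b_lt1] du i j.
have c_ge0 : 0 <= c by rewrite -[c]mulr1 -(expr0 b); apply: le_trans (du 0%N).
elim: j i => [|j IH] i.
  by rewrite addn0 (d_eq0 _ _).2 // divr_ge0 ?mulr_ge0 ?exprn_ge0 // subr_ge0 ltW.
rewrite -addSnnS; apply: le_trans (d_triangle _ (u i.+1) _) _.
have -> : c * b ^+ i / (1 - b) = c * b ^+ i + c * b ^+ i.+1 / (1 - b).
  by rewrite exprS; field; lra.
exact: lerD.
Qed.

Lemma geometric_chain_cauchy (u : nat -> X) (c b : R) : 0 <= b < 1 ->
    (forall j, d (u j) (u j.+1) <= c * b ^+ j) ->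
  forall e, 0 < e -> exists N, forall m n, (N <= m)%N -> (N <= n)%N ->
    d (u m) (u n) < e.
Proof.
move=> b01 du e e_gt0; have /andP[b_ge0 b_lt1] := b01.
have c_ge0 : 0 <= c by rewrite -[c]mulr1 -(expr0 b); apply: le_trans (du 0%N).
have eta_gt0 : 0 < e * (1 - b) / (2 * (c + 1)).
  by rewrite divr_gt0 ?mulr_gt0 ?subr_gt0 //; lra.
have [N bN] := expr_lt_eventually b01 eta_gt0.
have tail n : (N <= n)%N -> d (u N) (u n) < e / 2.
  move=> /subnKC <-; apply: le_lt_trans (geometric_chain_dist b01 du N _) _.
  have := bN N (leqnn N); rewrite ltr_pdivlMr ?ltr_pdivrMr; try lra.
  have := exprn_ge0 N b_ge0; nra.
exists N => m n /tail dm /tail dn.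
by apply: le_lt_trans (d_triangle _ (u N) _) _; rewrite distC; lra.
Qed.

Lemma sub_mcball_dist l z r : mcball d z r `<=` mcball d l (d l z + r).
Proof. by move=> y zy; apply: le_trans (d_triangle l z y) _; rewrite lerD2l. Qed.

Lemma shrinking_balls_near_limit (z : nat -> X) (A : nat -> set X) (b r0 : R) l :
    0 <= b < 1 -> 0 < r0 -> (forall j, A j `<=` mcball d (z j) (b ^+ j * r0)) ->
    (forall e, 0 < e -> exists N, forall n, (N <= n)%N -> d (z n) l < e) ->
  forall e, 0 < e -> exists j, A j `<=` mcball d l e.
Proof.
move=> b01 r0_gt0 AB zl e e_gt0.
have [N1 zN1] := zl (e / 2) ltac:(lra).
have [N2 bN2] := expr_lt_eventually b01 (divr_gt0 e_gt0 (mulr_gt0 (ltr0Sn R 1) r0_gt0)).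
have b_j := bN2 _ (leq_maxr N1 N2); rewrite ltr_pdivlMr ?mulr_gt0 // in b_j.
exists (maxn N1 N2) => y /AB /(sub_mcball_dist l) /le_trans; apply.
by rewrite distC; have := zN1 _ (leq_maxl N1 N2); lra.
Qed.

Lemma Dsup_torbit_ge0 (T : X -> X) x y : (0 <= Dsup d x (torbit T y))%E.
Proof. by apply: le_trans (Dsup_ge d x (torbit_iter T y 0)); rewrite lee_fin. Qed.

Lemma orbit_contraction_le (T : X -> X) k k' :
  k <= k' -> orbit_contraction d T k -> orbit_contraction d T k'.
Proof.
move=> kk' HL x y cond n n_gt0; apply: le_trans (HL x y cond n n_gt0) _.
by rewrite lee_wpmul2r ?lee_fin ?Dsup_torbit_ge0.
Qed.

Section Contraction.
Variables (T : X -> X) (kb : R).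
Hypotheses (kb_gt0 : 0 < kb) (HL : orbit_contraction d T kb).

Lemma orbit_contraction_ball x y n r a : (0 < n)%N ->
    (Dsup d x (torbit T y) <= Dsup d x (torbit T x))%E ->
    torbit T y `<=` mcball d x r -> kb * r < a ->
  exists m, torbit T (iter m T y) `<=` mcball d (iter n T x) a.
Proof.
move=> n_gt0 cond oyB kr_lt_a; apply: limn_Dsup_lt.
apply: le_lt_trans (HL cond n_gt0) _; apply: (@le_lt_trans _ _ (kb * r)%:E).
  by rewrite EFinM; apply: lee_wpmul2l; [rewrite lee_fin ltW | apply/Dsup_le].
by rewrite lte_fin.
Qed.

Lemma dist_image_le l w e : 0 < e -> torbit T w `<=` mcball d l e ->
  d l (T l) <= (1 + 2 * kb) * e.
Proof.
move=> e_gt0 owB; have [le_e|e_lt] := leP (d l (T l)) e.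
  by apply: le_trans le_e _; have := mulr_gt0 kb_gt0 e_gt0; lra.
have cond : (Dsup d l (torbit T w) <= Dsup d l (torbit T l))%E.
  apply: le_trans (Dsup_ge d l (torbit_iter T l 1)).
  by apply/Dsup_le => y /owB /le_trans; apply; exact: ltW.
have kbe_lt : kb * e < 2 * kb * e by have := mulr_gt0 kb_gt0 e_gt0; lra.
have [m omB] := orbit_contraction_ball (n := 1) isT cond owB kbe_lt.
have := owB _ (torbit_iter T w m); have := omB _ (torbit_iter T (iter m T w) 0).
rewrite /mcball /= => dTl dl.
apply: le_trans (d_triangle l (iter m T w) (T l)) _.
by rewrite [d _ (T l)]distC; lra.
Qed.

Section Regular.
Variables (mu alpha : R).
Hypotheses (mu01 : 0 < mu < 1) (alpha01 : 0 < alpha < 1).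
Hypothesis Hreg : ball_regular d kb mu alpha.

Let beta := Num.max alpha (1 - mu).

Let beta01 : 0 < beta < 1.
Proof.
case/andP: mu01 => mu_gt0 mu_lt1; case/andP: alpha01 => al_gt0 al_lt1.
by rewrite lt_max gt_max al_gt0 al_lt1 /=; lra.
Qed.

Lemma shrink_orbit_ball z w r : 0 < r -> torbit T w `<=` mcball d z r ->
  exists z' w', torbit T w' `<=` mcball d z' (beta * r) /\ d z z' <= 2 * r.
Proof.
move=> r_gt0 owB; have /andP[mu_gt0 mu_lt1] := mu01.
have /andP[al_gt0 al_lt1] := alpha01.
have [ozB|/existsNP[n]] := pselect (forall n, d z (iter n T z) <= (1 - mu) * r).
  exists z, z; split; last by rewrite (d_eq0 _ _).2 // mulr_ge0 // ltW.
  move=> _ /torbitP[n <-]; apply: le_trans (ozB n) _.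
  by rewrite ler_pM2r // /beta le_max lexx orbT.
move=> /negP; rewrite -ltNge; case: n => [|n] far.
  by move: far; rewrite /= (d_eq0 _ _).2 //; nra.
(* The hypothesis requires D(z,o(w')) <= D(z,o(z)); when o(w) fails it,
   o(z) itself lies in B(z,r). *)
have [w' ow'B cond] : exists2 w', torbit T w' `<=` mcball d z r &
    (Dsup d z (torbit T w') <= Dsup d z (torbit T z))%E.
  have [|lt_z] := leP (Dsup d z (torbit T w)) (Dsup d z (torbit T z)).
    by exists w.
  by exists z => //; apply/Dsup_le; apply: le_trans (ltW lt_z) _; apply/Dsup_le.
have kr_lt : kb * r < kb * ((1 + mu) * r) by rewrite ltr_pM2l // ltr_pMl // ltrDl.
have [m omB] := orbit_contraction_ball (n := n.+1) isT cond ow'B kr_lt.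
have [z' zB] := Hreg r_gt0 (ltW far).
have omB' : torbit T (iter m T w') `<=` mcball d z' (alpha * r).
  move=> y omy; apply: zB; split; last exact: omB.
  apply: le_trans (ow'B _ (sub_torbit_iter T w' m omy)) _.
  by rewrite ler_pMl // lerDl ltW.
exists z', (iter m T w'); split.
  by move=> y /omB' /le_trans; apply; rewrite ler_pM2r // /beta le_max lexx.
have := ow'B _ (torbit_iter T w' m); have := omB' _ (torbit_iter T (iter m T w') 0).
rewrite /mcball /= => dz' dz; apply: le_trans (d_triangle z (iter m T w') z') _.
by rewrite [d _ z']distC; nra.
Qed.

Lemma shrinking_orbit_balls z0 w0 r0 : 0 < r0 -> torbit T w0 `<=` mcball d z0 r0 ->
  exists z w : nat -> X,
    (forall j, torbit T (w j) `<=` mcball d (z j) (beta ^+ j * r0)) /\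
    (forall j, d (z j) (z j.+1) <= 2 * r0 * beta ^+ j).
Proof.
move=> r0_gt0 ow0B; have /andP[beta_gt0 _] := beta01.
pose P j (p : X * X) := torbit T p.2 `<=` mcball d p.1 (beta ^+ j * r0).
pose Q j (p q : X * X) := d p.1 q.1 <= 2 * r0 * beta ^+ j.
have P0 : P 0%N (z0, w0) by rewrite /P expr0 mul1r.
have step j p : P j p -> exists q, P j.+1 q /\ Q j p q.
  move: p => [z w] owB.
  have [z' [w' [ow'B dz]]] :=
    shrink_orbit_ball (mulr_gt0 (exprn_gt0 j beta_gt0) r0_gt0) owB.
  by exists (z', w'); rewrite /P /Q /= exprS -mulrA mulrAC -mulrA.
have [s sP] := dependent_choice_nat P0 step.
by exists (fun j => (s j).1), (fun j => (s j).2); split=> j; case: (sP j).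
Qed.

Lemma bounded_orbit_fixed_point x : is_complete d -> mbounded d (torbit T x) ->
  exists l, T l = l.
Proof.
move=> hcomp [x0 [r oxr]].
have r1_gt0 : 0 < r + 1 by have := oxr _ (torbit_iter T x 0); have := d_ge0 x0 x; lra.
have oxB : torbit T x `<=` mcball d x0 (r + 1).
  by move=> y /oxr; rewrite /mcball /=; lra.
have [z [w [owB dz]]] := shrinking_orbit_balls r1_gt0 oxB.
have /andP[beta_gt0 beta_lt1] := beta01.
have beta_ge0_lt1 : 0 <= beta < 1 by rewrite ltW.
have [l zl] := hcomp z (geometric_chain_cauchy beta_ge0_lt1 dz).
have near_l := shrinking_balls_near_limit beta_ge0_lt1 r1_gt0 owB zl.
have c_gt0 : 0 < 1 + 2 * kb by rewrite addr_gt0 ?mulr_gt0.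
exists l; apply/esym/d_eq0/eqP; rewrite eq_le d_ge0 andbT.
apply/ler_addgt0Pr => e e_gt0; rewrite add0r.
have [j owjB] := near_l _ (divr_gt0 e_gt0 c_gt0).
apply: le_trans (dist_image_le (divr_gt0 e_gt0 c_gt0) owjB) _.
by rewrite mulrC divfK ?gt_eqF.
Qed.

End Regular.
End Contraction.
End Metric.

Lemma lifschitz_char_regular (R : realType) (X : Type) (d : X -> X -> R) (k : R) :
    (k%:E < lifschitz_char d)%E ->
  exists kb mu alpha, [/\ 0 < kb, k <= kb, 0 < mu < 1, 0 < alpha < 1 &
    ball_regular d kb mu alpha].
Proof.
move=> /ereal_sup_gt[_ [c [c_ge1 c_reg] <-]]; rewrite lte_fin => k_lt_c.
have kb_lt_c : Num.max k 2^-1 < c.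
  by rewrite gt_max k_lt_c /=; apply: lt_le_trans c_ge1; lra.
have [mu [alpha [mu01 [alpha01 reg]]]] := c_reg _ kb_lt_c.
exists (Num.max k 2^-1), mu, alpha.
by split => //; rewrite ?lt_max ?le_max ?lexx ?invr_gt0 ?ltr0n ?orbT.
Qed.

Theorem corollary4p4 (R : realType) (X : Type) (d : X -> X -> R)
  (hmet : is_metric d) (hcomp : is_complete d) (T : X -> X) :
  (exists k : R, (k%:E < lifschitz_char d)%E /\
    forall x y : X, (Dsup d x (torbit T y) <= Dsup d x (torbit T x))%E ->
      forall n : nat, (0 < n)%N ->
        (limn (fun m : nat => Dsup d (iter n T x) (torbit T (iter m T y)))
           <= k%:E * Dsup d x (torbit T y))%E) ->
  (forall x : X, ~ mbounded d (torbit T x)) \/ (exists x : X, T x = x).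
Proof.
move=> [k [k_lt HL]].
have [kb [mu [alpha [kb_gt0 k_le_kb mu01 alpha01 reg]]]] := lifschitz_char_regular k_lt.
have HLkb : orbit_contraction d T kb := orbit_contraction_le hmet k_le_kb HL.
have [[x xb]|unbounded] := pselect (exists x, mbounded d (torbit T x)).
  right; exact: (bounded_orbit_fixed_point hmet kb_gt0 HLkb mu01 alpha01 reg
    hcomp xb).
by left => x xb; apply: unbounded; exists x.
Qed.
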